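(* For every $n\ge1$, every integer $r\ge 0$, every $\lambda\ge 0$, every $y\in\mathbb{R}^n$ and every $i\in[n]$, $$\max_{J\in\mathcal{I}:\, i\in J}\ \min_{I\in\mathcal{I}:\, i\in I,\ I\subseteq J}\Big[(P^{(|I|,r)}y_I)_i+\frac{\lambda C_{I,J}}{|I|}\Big]\ \le\ \min_{J\in\mathcal{I}:\, i\in J}\ \max_{I\in\mathcal{I}:\, i\in I,\ I\subseteq J}\Big[(P^{(|I|,r)}y_I)_i-\frac{\lambda C_{I,J}}{|I|}\Big].$$
   Context: $[n]=\{1,\dots,n\}$. An interval of $[n]$ is $[a:b]=\{a,\dots,b\}$ with $1\le a\le b\le n$; $\mathcal{I}$ is the set of all intervals of $[n]$. For $v\in\mathbb{R}^n$ and an interval $I$, $v_I\in\mathbb{R}^{|I|}$ is the restriction of $v$ to $I$. For an interval $I=[a:b]$ and integer $r\ge0$, let $S^{(I,r)}=\{(p(a/n),p((a+1)/n),\dots,p(b/n)) : p \text{ a real polynomial of degree at most } r\}\subseteq\mathbb{R}^{|I|}$; this subspace depends only on $|I|$, and $P^{(|I|,r)}$ denotes the orthogonal projection matrix onto it. For $i\in I$, $(P^{(|I|,r)}y_I)_i$ denotes the entry of the vector $P^{(|I|,r)}y_I$ at the position corresponding to $i$ (i.e. position $i-a+1$). For intervals $I\subseteq J$ with $J=[j_1:j_2]$: $C_{I,J}=1$ if $I$ contains neither $j_1$ nor $j_2$; $C_{I,J}=-1$ if $I=J$; $C_{I,J}=0$ otherwise. *)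

From HB Require Import structures.
From mathcomp Require Import all_boot all_order all_algebra.
From mathcomp Require Import reals.
From Stdlib Require Import ClassicalEpsilon.
Set Implicit Arguments. Unset Strict Implicit. Unset Printing Implicit Defensive.
Import Order.TTheory GRing.Theory Num.Theory.
Local Open Scope ring_scope.

Section Defs.
Variable R : realType.

(* 1-based access to a row vector; 0 outside the range. *)
Definition vat (m : nat) (v : 'rV[R]_m) (j : nat) : R :=
  odflt 0 (omap (v 0) (insub j.-1 : option 'I_m)).

(* Interval [a:b] of [n] is encoded by the pair (a,b); its length is b-a+1. *)
Definition ilen (I : nat * nat) : nat := (I.2 - I.1).+1.

Definition in_int (i : nat) (I : nat * nat) : bool := (I.1 <= i <= I.2)%N.

Definition sub_int (I J : nat * nat) : bool := (J.1 <= I.1)%N && (I.2 <= J.2)%N.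

Definition intervals (n : nat) : seq (nat * nat) :=
  [seq ab <- [seq (a, b) | a <- iota 1 n, b <- iota 1 n] | (ab.1 <= ab.2)%N].

(* S^{(I,r)} for I = [a:b] (m = |I|): vectors (p(a/n), ..., p(b/n)), deg p <= r. *)
Definition in_polyS (n a r m : nat) (v : 'rV[R]_m) : Prop :=
  exists p : {poly R}, (size p <= r.+1)%N /\
    forall k : 'I_m, v 0 k = p.[(a + k)%:R / n%:R].

Definition dotv (m : nat) (u v : 'rV[R]_m) : R := \sum_(k < m) u 0 k * v 0 k.

Definition orth_proj (n a r m : nat) (y : 'rV[R]_m) : 'rV[R]_m :=
  epsilon (inhabits 0)
    (fun z => in_polyS n a r z /\
       forall s, in_polyS n a r s -> dotv (y - z) s = 0).

Definition restr (n : nat) (y : 'rV[R]_n) (I : nat * nat) : 'rV[R]_(ilen I) :=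
  \row_(k < ilen I) vat y (I.1 + k).

(* (P^{(|I|,r)} y_I)_i, i given as an index of [n] (position i - a + 1 in the vector). *)
Definition projI (n r : nat) (y : 'rV[R]_n) (I : nat * nat) (i : nat) : R :=
  vat (orth_proj n I.1 r (restr y I)) (i - I.1).+1.

Definition CIJ (I J : nat * nat) : R :=
  if ~~ in_int J.1 I && ~~ in_int J.2 I then 1
  else if I == J then -1 else 0.

Definition seqmax (s : seq R) : R := foldr Num.max (head 0 s) (behead s).
Definition seqmin (s : seq R) : R := foldr Num.min (head 0 s) (behead s).

End Defs.
Arguments CIJ {R}.

From HB Require Import structures.
From mathcomp Require Import all_boot all_order all_algebra.
From mathcomp Require Import reals.
From mathcomp Require Import zify lra.
Set Implicit Arguments. Unset Strict Implicit. Unset Printing Implicit Defensive.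
Import Order.TTheory GRing.Theory Num.Theory.
Local Open Scope ring_scope.

(* For intervals J = [a:b] and J' = [a':b'] containing i, the interval
   I = J ∩ J' contains i and lies in both, and C_{I,J} + C_{I,J'} <= 0: I
   contains max(a, a'), so it cannot avoid the left endpoints of both J and
   J', and if it avoids both endpoints of J then I = J', so C_{I,J'} = -1.
   Hence the term indexed by I shows that the inner min at J is at most the
   inner max at J', whatever the projection values are; so the max of the
   former is at most the min of the latter. *)

Section SeqMaxMin.
Variable R : realType.
Implicit Types (s t : seq R) (c x : R).

Lemma seqmax_le s c : s != [::] -> (seqmax s <= c) = all (<= c) s.
Proof.
case: s => // h t _; rewrite /seqmax /=.
by elim: t => [|z t IH] /=; rewrite ?andbT // ge_max IH andbCA.
Qed.

Lemma seqmin_ge s c : s != [::] -> (c <= seqmin s) = all (>= c) s.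
Proof.
case: s => // h t _; rewrite /seqmin /=.
by elim: t => [|z t IH] /=; rewrite ?andbT // le_min IH andbCA.
Qed.

Lemma le_seqmax s x : x \in s -> x <= seqmax s.
Proof.
move=> xs; have s_neq0 : s != [::] by case: s xs.
by have := lexx (seqmax s); rewrite {1}seqmax_le // => /allP; apply.
Qed.

Lemma seqmin_le s x : x \in s -> seqmin s <= x.
Proof.
move=> xs; have s_neq0 : s != [::] by case: s xs.
by have := lexx (seqmin s); rewrite {1}seqmin_ge // => /allP; apply.
Qed.

Lemma seqmax_le_seqmin s t : s != [::] -> t != [::] ->
  {in s & t, forall x y, x <= y} -> seqmax s <= seqmin t.
Proof.
move=> s_neq0 t_neq0 le_st; rewrite seqmin_ge //; apply/allP => y yt.
by rewrite seqmax_le //; apply/allP => x xs; apply: le_st.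
Qed.

End SeqMaxMin.

Definition imeet (J J' : nat * nat) : nat * nat :=
  (maxn J.1 J'.1, minn J.2 J'.2).

Lemma imeetC J J' : imeet J J' = imeet J' J.
Proof. by rewrite /imeet maxnC minnC. Qed.

Lemma mem_intervals n a b :
  ((a, b) \in intervals n) = [&& (1 <= a)%N, (a <= b)%N & (b <= n)%N].
Proof.
rewrite /intervals mem_filter /=; apply/andP/idP.
  case=> le_ab /allpairsP [[x z] /= [+ + [Ex Ez]]]; subst x z.
  by rewrite !mem_iota => ? ?; apply/and3P; split; lia.
move=> /and3P [a_ge1 le_ab b_le_n]; split => //.
by apply/allpairsP; exists (a, b); rewrite /= !mem_iota; split => //; lia.
Qed.

Lemma imeet_mem n i J J' : J \in intervals n -> J' \in intervals n ->
  in_int i J -> in_int i J' ->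
  imeet J J' \in [seq K <- intervals n | in_int i K && sub_int K J].
Proof.
case: J J' => a b [a' b']; rewrite !mem_intervals /in_int /sub_int /=.
move=> /and3P [? ? ?] /and3P [? ? ?] /andP [? ?] /andP [? ?].
by rewrite mem_filter mem_intervals /=; repeat (apply/andP; split); lia.
Qed.

Lemma CIJ_imeet_le0 (R : realType) i J J' : in_int i J -> in_int i J' ->
  CIJ (imeet J J') J + CIJ (imeet J J') J' <= 0 :> R.
Proof.
case: J J' => a b [a' b']; rewrite /CIJ /in_int /imeet /= !xpair_eqE.
move=> /andP [? ?] /andP [? ?].
case: ifP => ?; case: ifP => ?; try case: ifP => ?; try case: ifP => ?;
  rewrite ?addr0 ?add0r ?lerN10 ?ler10 //; try lra; exfalso; lia.
Qed.

Theorem lemma1 (R : realType) (n r : nat) (lam : R) (y : 'rV[R]_n) (i : nat) :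
  (0 < n)%N -> 0 <= lam -> (1 <= i <= n)%N ->
  seqmax [seq seqmin [seq projI r y K i + lam * CIJ K L / (ilen K)%:R
                     | K <- intervals n & in_int i K && sub_int K L]
         | L <- intervals n & in_int i L]
  <=
  seqmin [seq seqmax [seq projI r y K i - lam * CIJ K L / (ilen K)%:R
                     | K <- intervals n & in_int i K && sub_int K L]
         | L <- intervals n & in_int i L].
Proof.
move=> _ lam_ge0 i_in_n.
set S := [seq L <- intervals n | in_int i L].
have S_neq0 : S != [::].
  have : (i, i) \in S by rewrite mem_filter /in_int /= mem_intervals leqnn.
  by case: S.
apply: seqmax_le_seqmin; rewrite -?size_eq0 ?size_map ?size_eq0 //.
move=> _ _ /mapP [J + ->] /mapP [J' + ->].
rewrite /S [J \in _]mem_filter [J' \in _]mem_filter.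
move=> /andP [iJ JS] /andP [iJ' J'S]; set K := imeet J J'.
have C_le0 : CIJ K J + CIJ K J' <= 0 :> R := CIJ_imeet_le0 R iJ iJ'.
have penalty_le : lam * CIJ K J / (ilen K)%:R <= - (lam * CIJ K J' / (ilen K)%:R).
  rewrite -subr_ge0 -opprD oppr_ge0 addrC -mulrDl -mulrDr.
  by apply: mulr_le0_ge0; [apply: mulr_ge0_le0 | rewrite invr_ge0 ler0n].
apply: (@le_trans _ _ (projI r y K i + lam * CIJ K J / (ilen K)%:R)).
  by apply/seqmin_le/mapP; exists K => //; apply: imeet_mem.
apply: (@le_trans _ _ (projI r y K i - lam * CIJ K J' / (ilen K)%:R)).
  by rewrite lerD2l.
by apply/le_seqmax/mapP; exists K => //; rewrite /K imeetC; apply: imeet_mem.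
Qed.
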